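(* Let $E$ be a finite-dimensional real vector space ordered by a closed proper cone $C$, fix a norm $\|\cdot\|$ on $E$, let $0<T\leq\infty$, and let $U\subset E$ be a nonempty convex open set. Let $f\colon[0,T)\times U\to E$ be a continuous map such that $f(t,\cdot)$ is convex on $U$ for every $t\in[0,T)$. Then $f$ is locally Lipschitz, i.e. for every compact $K\subset U$ and every $t\in[0,T)$, $$L_{t,K}(f)=\sup_{0\leq\tau\leq t,\;x_1,x_2\in K,\;x_1\neq x_2}\frac{\|f(\tau,x_2)-f(\tau,x_1)\|}{\|x_2-x_1\|}<\infty.$$
   Context: A cone $C$ ($\lambda C\subset C$ for $\lambda>0$) is proper if $C+C\subset C$ and $C\cap(-C)=\{0\}$; it induces the partial order $x\leq y$ iff $y-x\in C$. A map $g\colon D\to E$ is convex if $D$ is convex and $g(\lambda x+(1-\lambda)y)\leq\lambda g(x)+(1-\lambda)g(y)$ (in the order induced by $C$) for all $x,y\in D$, $\lambda\in[0,1]$. *)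

From Stdlib Require Import Reals.
From Stdlib Require Fin.
Open Scope R_scope.

(* E = R^n, the model of an n-dimensional real vector space. *)
Definition E (n : nat) := Fin.t n -> R.

Definition vadd {n} (x y : E n) : E n := fun i => x i + y i.
Definition vscal {n} (a : R) (x : E n) : E n := fun i => a * x i.
Definition vopp {n} (x : E n) : E n := fun i => - x i.
Definition vsub {n} (x y : E n) : E n := fun i => x i - y i.
Definition vzero {n} : E n := fun _ => 0.

Definition is_norm {n} (N : E n -> R) : Prop :=
  (forall x, 0 <= N x) /\
  (forall x, N x = 0 -> forall i, x i = 0) /\
  (forall a x, N (vscal a x) = Rabs a * N x) /\
  (forall x y, N (vadd x y) <= N x + N y).

Definition is_open {n} (N : E n -> R) (U : E n -> Prop) : Prop :=
  forall x, U x -> exists r, 0 < r /\ forall y, N (vsub y x) < r -> U y.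

Definition is_closed {n} (N : E n -> R) (C : E n -> Prop) : Prop :=
  is_open N (fun x => ~ C x).

Definition seq_cv {n} (N : E n -> R) (u : nat -> E n) (l : E n) : Prop :=
  forall eps, 0 < eps -> exists M, forall k, (M <= k)%nat -> N (vsub (u k) l) < eps.

Definition is_compact {n} (N : E n -> R) (K : E n -> Prop) : Prop :=
  forall u : nat -> E n, (forall k, K (u k)) ->
    exists (phi : nat -> nat) (l : E n),
      (forall k, (phi k < phi (S k))%nat) /\ K l /\ seq_cv N (fun k => u (phi k)) l.

Definition is_convex_set {n} (U : E n -> Prop) : Prop :=
  forall x y a, U x -> U y -> 0 <= a <= 1 ->
    U (vadd (vscal a x) (vscal (1 - a) y)).

Definition is_proper_cone {n} (C : E n -> Prop) : Prop :=
  (forall a x, 0 < a -> C x -> C (vscal a x)) /\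
  (forall x y, C x -> C y -> C (vadd x y)) /\
  C vzero /\
  (forall x, C x -> C (vopp x) -> x = vzero).

Definition cle {n} (C : E n -> Prop) (x y : E n) : Prop := C (vsub y x).

Definition is_convex_map {n} (C : E n -> Prop) (U : E n -> Prop) (g : E n -> E n) : Prop :=
  is_convex_set U /\
  forall x y a, U x -> U y -> 0 <= a <= 1 ->
    cle C (g (vadd (vscal a x) (vscal (1 - a) y)))
          (vadd (vscal a (g x)) (vscal (1 - a) (g y))).

(* time horizon T ∈ (0, +oo]: None stands for +oo *)
Definition pos_horizon (T : option R) : Prop :=
  match T with Some T' => 0 < T' | None => True end.

Definition in_time (T : option R) (t : R) : Prop :=
  0 <= t /\ match T with Some T' => t < T' | None => True end.

Definition cont_on {n} (N : E n -> R) (T : option R) (U : E n -> Prop)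
  (f : R -> E n -> E n) : Prop :=
  forall t x, in_time T t -> U x ->
    forall eps, 0 < eps -> exists delta, 0 < delta /\
      forall s y, in_time T s -> U y -> Rabs (s - t) < delta -> N (vsub y x) < delta ->
        N (vsub (f s y) (f t x)) < eps.

(* For a compact
   K ⊂ U and a time t the proof combines three facts:
   1. every closed proper cone is normal: 0 <= c <= v implies N c <= kappa N v
      (compactness of the unit sphere, via equivalence of N with the l1 norm);
   2. by continuity and compactness of [0,t] × K, for some r > 0 the closed
      r-neighbourhood of K lies in U and |f| <= M on [0,t] × that neighbourhood;
   3. a C-convex map bounded by M on the r-neighbourhoods of x1, x2 satisfies
      |g x2 - g x1| <= (4 kappa + 2) M / r |x2 - x1|  (convexity along the line
      through x1 and x2, extended by r on both sides, plus normality). *)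

From Stdlib Require Import Reals Lra Lia List Rtopology.
From Stdlib Require Import FunctionalExtensionality Classical ClassicalEpsilon.
Open Scope R_scope.

Lemma vext {n} (x y : E n) : (forall i, x i = y i) -> x = y.
Proof. exact (functional_extensionality x y). Qed.

Ltac vec_ring := apply vext; intro; unfold vadd, vsub, vscal, vopp, vzero; ring.

Lemma vsub_vzero {n} (x : E n) : vsub x vzero = x.
Proof. vec_ring. Qed.

Section NormFacts.
Context {n : nat} {N : E n -> R} (HN : is_norm N).

Lemma N_nonneg x : 0 <= N x.
Proof. apply (proj1 HN). Qed.

Lemma N_scal a x : N (vscal a x) = Rabs a * N x.
Proof. apply (proj1 (proj2 (proj2 HN))). Qed.

Lemma N_add x y : N (vadd x y) <= N x + N y.
Proof. apply (proj2 (proj2 (proj2 HN))). Qed.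

Lemma N_eq0 x : N x = 0 -> x = vzero.
Proof. intro H; apply vext; exact (proj1 (proj2 HN) x H). Qed.

Lemma N_zero : N vzero = 0.
Proof.
  replace (@vzero n) with (vscal 0 (@vzero n)) by vec_ring.
  rewrite N_scal, Rabs_R0; ring.
Qed.

Lemma N_opp x : N (vopp x) = N x.
Proof.
  replace (vopp x) with (vscal (-1) x) by vec_ring.
  rewrite N_scal, Rabs_left by lra; ring.
Qed.

Lemma N_sub_sym x y : N (vsub x y) = N (vsub y x).
Proof. replace (vsub x y) with (vopp (vsub y x)) by vec_ring. apply N_opp. Qed.

Lemma N_tri x y z : N (vsub x y) <= N (vsub x z) + N (vsub z y).
Proof. replace (vsub x y) with (vadd (vsub x z) (vsub z y)) by vec_ring. apply N_add. Qed.

Lemma N_sub_le x y : N (vsub x y) <= N x + N y.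
Proof.
  replace (vsub x y) with (vadd x (vopp y)) by vec_ring.
  rewrite <- (N_opp y). apply N_add.
Qed.

Lemma N_div x s : 0 < s -> N (vscal (/ s) x) = N x / s.
Proof.
  intro Hs. rewrite N_scal, Rabs_right by (left; apply Rinv_0_lt_compat; exact Hs).
  unfold Rdiv; ring.
Qed.

End NormFacts.

(* P k holds for all large k; [seq_cv] and [Un_cv] are stated in this form. *)
Definition eventually (P : nat -> Prop) : Prop :=
  exists M, forall k, (M <= k)%nat -> P k.

Lemma eventually_and (P Q : nat -> Prop) :
  eventually P -> eventually Q -> eventually (fun k => P k /\ Q k).
Proof.
  intros [M1 H1] [M2 H2]. exists (max M1 M2). intros k Hk.
  split; [apply H1 | apply H2]; lia.
Qed.

Lemma eventually_witness (P : nat -> Prop) : eventually P -> exists k, P k.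
Proof. intros [M H]. exists M. apply H; lia. Qed.

Definition strictly_increasing (phi : nat -> nat) : Prop :=
  forall k, (phi k < phi (S k))%nat.

Lemma strictly_increasing_ge phi : strictly_increasing phi -> forall k, (k <= phi k)%nat.
Proof. intros H k; induction k; [lia|]. specialize (H k); lia. Qed.

Lemma strictly_increasing_comp phi psi :
  strictly_increasing phi -> strictly_increasing psi ->
  strictly_increasing (fun k => phi (psi k)).
Proof.
  intros Hphi Hpsi k.
  assert (Hmono : forall a b, (a < b)%nat -> (phi a < phi b)%nat).
  { intros a b Hab. induction Hab; [apply Hphi|]. specialize (Hphi m); lia. }
  apply Hmono, Hpsi.
Qed.

Lemma eventually_subseq (P : nat -> Prop) phi :
  strictly_increasing phi -> eventually P -> eventually (fun k => P (phi k)).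
Proof.
  intros Hphi [M HM]. exists M. intros k Hk.
  apply HM. pose proof (strictly_increasing_ge phi Hphi k); lia.
Qed.

Lemma Un_cv_subseq u l phi :
  strictly_increasing phi -> Un_cv u l -> Un_cv (fun k => u (phi k)) l.
Proof. intros Hphi Hcv eps He. exact (eventually_subseq _ phi Hphi (Hcv eps He)). Qed.

Lemma seq_cv_subseq {n} (N : E n -> R) u l phi :
  strictly_increasing phi -> seq_cv N u l -> seq_cv N (fun k => u (phi k)) l.
Proof. intros Hphi Hcv eps He. exact (eventually_subseq _ phi Hphi (Hcv eps He)). Qed.

Lemma eventually_inv_succ_lt eps : 0 < eps -> eventually (fun k => / (INR k + 1) < eps).
Proof.
  intro He. destruct (archimed_cor1 eps He) as [m [Hm Hm0]]. exists m. intros k Hk.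
  apply Rlt_trans with (2 := Hm). apply Rinv_lt_contravar.
  - apply Rmult_lt_0_compat; [apply lt_0_INR; exact Hm0 | pose proof (pos_INR k); lra].
  - apply le_INR in Hk. lra.
Qed.

Lemma eventually_small (r : nat -> R) phi :
  (forall k, r k <= / (INR k + 1)) -> strictly_increasing phi ->
  forall eps, 0 < eps -> eventually (fun k => r (phi k) < eps).
Proof.
  intros Hr Hphi eps He.
  destruct (eventually_subseq _ phi Hphi (eventually_inv_succ_lt eps He)) as [M HM].
  exists M. intros k Hk. eapply Rle_lt_trans; [apply Hr | apply HM, Hk].
Qed.

Lemma eventually_large phi X :
  strictly_increasing phi -> eventually (fun k => X < INR (phi k)).
Proof.
  intro Hphi. destruct (INR_unbounded X) as [m Hm]. exists m. intros k Hk.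
  pose proof (strictly_increasing_ge phi Hphi k).
  assert (INR m <= INR (phi k)) by (apply le_INR; lia). lra.
Qed.

Lemma real_bolzano_weierstrass (u : nat -> R) (B : R) :
  (forall k, Rabs (u k) <= B) ->
  exists phi l, strictly_increasing phi /\ Un_cv (fun k => u (phi k)) l.
Proof.
  intros Hb.
  destruct (Bolzano_Weierstrass u (fun c => -B <= c <= B) (compact_P3 _ _)) as [l Hl].
  { intro k; specialize (Hb k); unfold Rabs in Hb; destruct (Rcase_abs (u k)); lra. }
  (* l is an adherence value: every tail visits every interval around l *)
  assert (Hvisit : forall mk : nat * nat, exists p,
             (snd mk <= p)%nat /\ Rabs (u p - l) < / (INR (fst mk) + 1)).
  { intros [m k].
    assert (Hpos : 0 < / (INR m + 1)) by (apply Rinv_0_lt_compat; pose proof (pos_INR m); lra).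
    destruct (Hl (disc l (mkposreal _ Hpos)) k) as [p [Hp1 Hp2]].
    - exists (mkposreal _ Hpos). intros y Hy; exact Hy.
    - exists p; split; assumption. }
  destruct (choice _ Hvisit) as [g Hg].
  set (phi := fix phi k := match k with O => g (O, O) | S k' => g (k, S (phi k')) end).
  exists phi, l. split.
  - intro k. exact (proj1 (Hg (S k, S (phi k)))).
  - intros eps He. destruct (eventually_inv_succ_lt eps He) as [M HM].
    exists M. intros k Hk. unfold R_dist.
    assert (Hk' : Rabs (u (phi k) - l) < / (INR k + 1)) by (destruct k; apply Hg).
    specialize (HM k Hk). lra.
Qed.

Lemma limit_in_interval (a : nat -> R) s t :
  (forall k, 0 <= a k <= t) -> Un_cv a s -> 0 <= s <= t.
Proof.
  intros Ha Hcv. split; apply Rnot_lt_le; intro Hs.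
  - destruct (Hcv (- s)) as [M HM]; [lra|]. specialize (HM M (le_n _)). specialize (Ha M).
    unfold R_dist in HM. apply Rabs_def2 in HM. lra.
  - destruct (Hcv (s - t)) as [M HM]; [lra|]. specialize (HM M (le_n _)). specialize (Ha M).
    unfold R_dist in HM. apply Rabs_def2 in HM. lra.
Qed.

(** * Finite dimension: coordinates, the l1 norm and equivalence of norms *)

Fixpoint fin_enum (n : nat) : list (Fin.t n) :=
  match n with O => nil | S m => Fin.F1 :: map Fin.FS (fin_enum m) end.

Lemma fin_enum_all n (i : Fin.t n) : In i (fin_enum n).
Proof. induction i; simpl; [left; reflexivity | right; apply in_map; assumption]. Qed.

Definition weighted_l1 {n} (w : Fin.t n -> R) (l : list (Fin.t n)) (x : E n) : R :=
  fold_right (fun i acc => w i * Rabs (x i) + acc) 0 l.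

Definition l1 {n} (x : E n) : R := weighted_l1 (fun _ => 1) (fin_enum n) x.

Definition unit_vec {n} (i : Fin.t n) : E n := fun j => if Fin.eq_dec i j then 1 else 0.

Section WeightedL1.
Context {n : nat} (w : Fin.t n -> R) (Hw : forall i, 0 <= w i).

Lemma weighted_l1_nonneg l x : 0 <= weighted_l1 w l x.
Proof.
  induction l as [|i l IH]; simpl; [lra|].
  pose proof (Hw i); pose proof (Rabs_pos (x i)). nra.
Qed.

Lemma weighted_l1_mono l (x y : E n) :
  (forall i, Rabs (x i) <= Rabs (y i)) -> weighted_l1 w l x <= weighted_l1 w l y.
Proof.
  intros Hxy; induction l as [|i l IH]; simpl; [lra|].
  pose proof (Hw i); pose proof (Hxy i). nra.
Qed.

Lemma weighted_l1_coord l x i : In i l -> w i * Rabs (x i) <= weighted_l1 w l x.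
Proof.
  induction l as [|j l IH]; simpl; [tauto|]. intros [<-|Hi].
  - pose proof (weighted_l1_nonneg l x); lra.
  - pose proof (IH Hi). pose proof (Hw j); pose proof (Rabs_pos (x j)). nra.
Qed.

Lemma weighted_l1_cv0 l (z : nat -> E n) :
  (forall i, In i l -> Un_cv (fun k => z k i) 0) ->
  forall eps, 0 < eps -> eventually (fun k => weighted_l1 w l (z k) < eps).
Proof.
  induction l as [|i l IH]; intros Hc eps He; simpl.
  - exists O; intros; lra.
  - assert (Hpos : 0 < eps / (2 * (w i + 1))) by (pose proof (Hw i); apply Rdiv_lt_0_compat; lra).
    destruct (eventually_and _ _ (IH (fun j Hj => Hc j (or_intror Hj)) (eps / 2) ltac:(lra))
                (Hc i (or_introl eq_refl) _ Hpos)) as [M HM].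
    exists M. intros k Hk. destruct (HM k Hk) as [Hrest Hi].
    unfold R_dist in Hi. rewrite Rminus_0_r in Hi.
    assert (w i * Rabs (z k i) <= eps / 2).
    { replace (eps / 2) with ((w i + 1) * (eps / (2 * (w i + 1))))
        by (field; pose proof (Hw i); lra).
      pose proof (Hw i); pose proof (Rabs_pos (z k i)). nra. }
    lra.
Qed.

Lemma weighted_l1_cv (u : nat -> E n) v :
  (forall i, Un_cv (fun k => u k i) (v i)) ->
  forall eps, 0 < eps -> eventually (fun k => weighted_l1 w (fin_enum n) (vsub (u k) v) < eps).
Proof.
  intro Hc. apply weighted_l1_cv0. intros i _ eps He.
  destruct (Hc i eps He) as [M HM]. exists M; intros k Hk.
  specialize (HM k Hk). unfold R_dist, vsub in *. rewrite Rminus_0_r; exact HM.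
Qed.

End WeightedL1.

Lemma l1_coord {n} (x : E n) i : Rabs (x i) <= l1 x.
Proof.
  pose proof (weighted_l1_coord (fun _ => 1) (fun _ => Rle_0_1) (fin_enum n) x i
                (fin_enum_all n i)).
  unfold l1; lra.
Qed.

Lemma l1_scal {n} a (x : E n) : l1 (vscal a x) = Rabs a * l1 x.
Proof.
  unfold l1. induction (fin_enum n) as [|i l IH]; simpl; [ring|].
  rewrite IH. unfold vscal. rewrite Rabs_mult. ring.
Qed.

Lemma coordinate_bolzano_weierstrass {n} (u : nat -> E n) (B : R) :
  (forall k i, Rabs (u k i) <= B) ->
  exists phi (v : E n), strictly_increasing phi /\
    forall i, Un_cv (fun k => u (phi k) i) (v i).
Proof.
  intros Hb.
  assert (Hlist : forall l : list (Fin.t n), exists phi (v : E n), strictly_increasing phi /\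
            forall i, In i l -> Un_cv (fun k => u (phi k) i) (v i)).
  { intro l. induction l as [|i l IH].
    - exists (fun k => k), (u 0%nat). split; [intro; lia | intros ? []].
    - destruct IH as [phi [v [Hphi Hv]]].
      destruct (real_bolzano_weierstrass (fun k => u (phi k) i) B (fun k => Hb _ _))
        as [psi [li [Hpsi Hli]]].
      exists (fun k => phi (psi k)), (fun j => if Fin.eq_dec j i then li else v j).
      split; [apply strictly_increasing_comp; assumption|].
      intros j Hj. destruct (Fin.eq_dec j i) as [->|Hji]; [exact Hli|].
      destruct Hj as [Hj|Hj]; [congruence|].
      apply (Un_cv_subseq (fun k => u (phi k) j)); auto. }
  destruct (Hlist (fin_enum n)) as [phi [v [Hphi Hv]]].
  exists phi, v. split; [exact Hphi|]. intro i; apply Hv, fin_enum_all.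
Qed.

Lemma unbounded_ratio_sequence {A : Type} (D : A -> Prop) (p q : A -> R) :
  ~ (exists c, 0 < c /\ forall a, D a -> p a <= c * q a) ->
  exists u : nat -> A, forall k, D (u k) /\ (INR k + 1) * q (u k) < p (u k).
Proof.
  intro Hno. apply (choice (fun k a => D a /\ (INR k + 1) * q a < p a)).
  intro k. apply NNPP; intro Hk. apply Hno.
  exists (INR k + 1). split; [pose proof (pos_INR k); lra|].
  intros a Ha. apply Rnot_lt_le. intro Hlt. apply Hk. exists a. split; assumption.
Qed.

Lemma ratio_le_inv_succ (k : nat) a b : 0 < b -> (INR k + 1) * a < b -> a / b <= / (INR k + 1).
Proof.
  intros Hb Hab. assert (Hk : 0 < INR k + 1) by (pose proof (pos_INR k); lra).
  replace (a / b) with (((INR k + 1) * a / b) * / (INR k + 1)) by (field; lra).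
  rewrite <- (Rmult_1_l (/ (INR k + 1))) at 2.
  apply Rmult_le_compat_r; [left; apply Rinv_0_lt_compat; exact Hk|].
  apply Rmult_le_reg_r with b; [exact Hb|]. unfold Rdiv. rewrite Rmult_assoc, Rinv_l; lra.
Qed.

Section NormEquivalence.
Context {n : nat} {N : E n -> R} (HN : is_norm N).

Lemma norm_le_weighted_l1 l (x : E n) :
  (forall j, ~ In j l -> x j = 0) -> N x <= weighted_l1 (fun i => N (unit_vec i)) l x.
Proof.
  revert x. induction l as [|i l IH]; intros x Hx; simpl.
  - replace x with (@vzero n) by (apply vext; intro j; symmetry; apply Hx; auto).
    rewrite N_zero by exact HN; lra.
  - set (x' := fun j => if Fin.eq_dec i j then 0 else x j).
    assert (Hsplit : x = vadd x' (vscal (x i) (unit_vec i))).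
    { apply vext; intro j; unfold vadd, vscal, x', unit_vec.
      destruct (Fin.eq_dec i j); subst; ring. }
    assert (H1 : N x' <= weighted_l1 (fun i => N (unit_vec i)) l x').
    { apply IH. intros j Hj. unfold x'. destruct (Fin.eq_dec i j); [reflexivity|].
      apply Hx. intros [?|?]; auto. }
    assert (H2 : weighted_l1 (fun i => N (unit_vec i)) l x' <=
                 weighted_l1 (fun i => N (unit_vec i)) l x).
    { apply weighted_l1_mono; [intro; apply N_nonneg, HN|].
      intro j; unfold x'. destruct (Fin.eq_dec i j); [rewrite Rabs_R0; apply Rabs_pos | lra]. }
    rewrite Hsplit at 1. eapply Rle_trans; [apply N_add, HN|].
    rewrite N_scal by exact HN. lra.
Qed.

Lemma coordinate_seq_cv (u : nat -> E n) v :
  (forall i, Un_cv (fun k => u k i) (v i)) -> seq_cv N u v.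
Proof.
  intros Hc eps He.
  destruct (weighted_l1_cv (fun i => N (unit_vec i)) (fun i => N_nonneg HN _) u v Hc eps He)
    as [M HM].
  exists M; intros k Hk. eapply Rle_lt_trans; [|apply (HM k Hk)].
  apply norm_le_weighted_l1. intros j Hj; exfalso; apply Hj, fin_enum_all.
Qed.

(* The converse domination: l1 <= c N, by compactness of the l1 unit sphere. *)
Lemma l1_le_norm : exists c, 0 < c /\ forall x, l1 x <= c * N x.
Proof.
  apply NNPP; intro Hno.
  destruct (unbounded_ratio_sequence (fun _ => True) l1 N ltac:(firstorder)) as [x Hx].
  assert (Hl1pos : forall k, 0 < l1 (x k)).
  { intro k. destruct (Hx k) as [_ H].
    pose proof (N_nonneg HN (x k)). pose proof (pos_INR k). nra. }
  set (y := fun k => vscal (/ l1 (x k)) (x k)).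
  assert (Hy1 : forall k, l1 (y k) = 1).
  { intro k. unfold y. rewrite l1_scal, Rabs_right by (left; apply Rinv_0_lt_compat; auto).
    specialize (Hl1pos k). field; lra. }
  assert (HyN : forall k, N (y k) <= / (INR k + 1)).
  { intro k. unfold y. rewrite N_div by auto. apply ratio_le_inv_succ; [auto | apply Hx]. }
  destruct (coordinate_bolzano_weierstrass y 1
              (fun k i => ltac:(rewrite <- (Hy1 k); apply l1_coord)))
    as [phi [v [Hphi Hv]]].
  assert (Hv0 : v = vzero).
  { apply (N_eq0 HN). apply Rle_antisym; [|apply N_nonneg, HN].
    apply Rle_plus_epsilon. intros eps He. rewrite Rplus_0_l.
    destruct (eventually_witness _ (eventually_and _ _
      (coordinate_seq_cv (fun k => y (phi k)) v Hv (eps / 2) ltac:(lra))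
      (eventually_small _ phi HyN Hphi (eps / 2) ltac:(lra)))) as [k [H1 H2]].
    pose proof (N_tri HN v vzero (y (phi k))) as Htri.
    rewrite !vsub_vzero, (N_sub_sym HN) in Htri. lra. }
  subst v.
  destruct (eventually_witness _ (weighted_l1_cv (fun _ => 1) (fun _ => Rle_0_1)
              (fun k => y (phi k)) vzero Hv 1 Rlt_0_1)) as [k Hk].
  rewrite vsub_vzero in Hk. fold (l1 (y (phi k))) in Hk. rewrite Hy1 in Hk. lra.
Qed.

Lemma norm_bolzano_weierstrass (u : nat -> E n) B :
  (forall k, N (u k) <= B) ->
  exists phi v, strictly_increasing phi /\ seq_cv N (fun k => u (phi k)) v.
Proof.
  intros Hb. destruct l1_le_norm as [c [Hc Hl1]].
  assert (Hcoord : forall k i, Rabs (u k i) <= c * B).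
  { intros k i. eapply Rle_trans; [apply l1_coord|]. eapply Rle_trans; [apply Hl1|].
    apply Rmult_le_compat_l; [lra | apply Hb]. }
  destruct (coordinate_bolzano_weierstrass u (c * B) Hcoord) as [phi [v [Hphi Hv]]].
  exists phi, v. split; [exact Hphi|]. apply coordinate_seq_cv, Hv.
Qed.

End NormEquivalence.

(** * Closed proper cones are normal *)

Lemma closed_seq_limit {n} (N : E n -> R) (C : E n -> Prop) u l :
  is_closed N C -> (forall k, C (u k)) -> seq_cv N u l -> C l.
Proof.
  intros Hcl Hu Hcv. apply NNPP; intro Hl. destruct (Hcl l Hl) as [r [Hr Hball]].
  destruct (Hcv r Hr) as [M HM]. apply (Hball (u M)); auto.
Qed.

(* The proof is by
   contradiction: normalised counterexamples c_k, v_k with N c_k = 1 and N v_k -> 0 have a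
   limit point l with l and -l in C, hence l = 0, contradicting N l = 1. *)
Lemma closed_cone_normal {n} (C : E n -> Prop) (N : E n -> R) :
  is_proper_cone C -> is_closed N C -> is_norm N ->
  exists kappa, 0 <= kappa /\ forall c v, C c -> C (vsub v c) -> N c <= kappa * N v.
Proof.
  intros (Hscal & _ & _ & Hpointed) Hcl HN. apply NNPP; intro Hno.
  destruct (unbounded_ratio_sequence (fun p : E n * E n => C (fst p) /\ C (vsub (snd p) (fst p)))
              (fun p => N (fst p)) (fun p => N (snd p))) as [p Hp].
  { intros [kappa [Hk Hb]]. apply Hno. exists kappa. split; [lra|].
    intros c v Hc Hv. exact (Hb (c, v) (conj Hc Hv)). }
  set (c := fun k => fst (p k)). set (v := fun k => snd (p k)).
  assert (Hcpos : forall k, 0 < N (c k)).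
  { intro k. destruct (Hp k) as [_ H]. pose proof (N_nonneg HN (v k)). pose proof (pos_INR k).
    unfold c, v in *. nra. }
  set (c' := fun k => vscal (/ N (c k)) (c k)). set (v' := fun k => vscal (/ N (c k)) (v k)).
  assert (Hinv : forall k, 0 < / N (c k)) by (intro; apply Rinv_0_lt_compat; auto).
  assert (Hc'1 : forall k, N (c' k) = 1).
  { intro k. unfold c'. rewrite (N_div HN) by auto. specialize (Hcpos k). field; lra. }
  assert (Hv'small : forall k, N (v' k) <= / (INR k + 1)).
  { intro k. unfold v'. rewrite (N_div HN) by auto. apply ratio_le_inv_succ; [auto | apply Hp]. }
  assert (HCc' : forall k, C (c' k)) by (intro k; apply Hscal; [auto | apply (Hp k)]).
  assert (HCd' : forall k, C (vsub (v' k) (c' k))).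
  { intro k. replace (vsub (v' k) (c' k)) with (vscal (/ N (c k)) (vsub (v k) (c k)))
      by (unfold c', v'; vec_ring).
    apply Hscal; [auto | apply (Hp k)]. }
  destruct (norm_bolzano_weierstrass HN c' 1 (fun k => Req_le _ _ (Hc'1 k))) as [phi [l [Hphi Hl]]].
  assert (HCl : C l) by exact (closed_seq_limit N C _ l Hcl (fun k => HCc' (phi k)) Hl).
  assert (HCml : C (vopp l)).
  { apply (closed_seq_limit N C (fun k => vsub (v' (phi k)) (c' (phi k))) (vopp l) Hcl);
      [intro; apply HCd'|].
    intros eps He.
    destruct (eventually_and _ _ (Hl (eps / 2) ltac:(lra))
                (eventually_small _ phi Hv'small Hphi (eps / 2) ltac:(lra))) as [M HM].
    exists M. intros k Hk. destruct (HM k Hk) as [H1 H2].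
    replace (vsub (vsub (v' (phi k)) (c' (phi k))) (vopp l))
      with (vadd (v' (phi k)) (vopp (vsub (c' (phi k)) l))) by vec_ring.
    eapply Rle_lt_trans; [apply (N_add HN)|]. rewrite (N_opp HN). lra. }
  assert (Hl0 : l = vzero) by exact (Hpointed l HCl HCml). subst l.
  destruct (eventually_witness _ (Hl 1 Rlt_0_1)) as [k Hk]. cbv beta in Hk.
  rewrite vsub_vzero, Hc'1 in Hk. lra.
Qed.

Lemma normal_cone_summand {n} (C : E n -> Prop) (N : E n -> R) kappa :
  (forall c v, C c -> C (vsub v c) -> N c <= kappa * N v) ->
  forall c1 c2, C c1 -> C c2 -> N c2 <= kappa * N (vadd c1 c2).
Proof.
  intros Hnormal c1 c2 H1 H2. apply Hnormal; [exact H2|].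
  replace (vsub (vadd c1 c2) c2) with c1 by vec_ring. exact H1.
Qed.

(** * Uniform bounds for a continuous map near a compact set *)

Lemma compact_time_space {n} (N : E n -> R) (K : E n -> Prop) t
  (tau : nat -> R) (x : nat -> E n) :
  is_compact N K -> (forall k, 0 <= tau k <= t) -> (forall k, K (x k)) ->
  exists phi s l, strictly_increasing phi /\ 0 <= s <= t /\ K l /\
    Un_cv (fun k => tau (phi k)) s /\ seq_cv N (fun k => x (phi k)) l.
Proof.
  intros HK Htau Hx.
  destruct (HK x Hx) as [phi [l [Hphi [Hl Hcv]]]].
  destruct (real_bolzano_weierstrass (fun k => tau (phi k)) t) as [psi [s [Hpsi Hcvs]]].
  { intro k. specialize (Htau (phi k)). rewrite Rabs_right by lra. lra. }
  exists (fun k => phi (psi k)), s, l.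
  split; [apply strictly_increasing_comp; assumption|].
  split; [exact (limit_in_interval _ s t (fun k => Htau (phi (psi k))) Hcvs)|].
  split; [exact Hl|]. split; [exact Hcvs|].
  exact (seq_cv_subseq N _ l psi Hpsi Hcv).
Qed.

Lemma in_time_le (T : option R) t s : in_time T t -> 0 <= s <= t -> in_time T s.
Proof. intros [Ht0 Ht1] Hs. split; [lra|]. destruct T; [lra | exact I]. Qed.

(* A continuous f on [0,T) × U is bounded on [0,t] × (closed r-neighbourhood of K) for
   some r > 0 with that neighbourhood inside U. By contradiction: a sequence of points at
   distance <= 1/(k+1) from K which leave U or where |f| exceeds k accumulates, by
   compactness, at some (s, l) ∈ [0,t] × K, contradicting openness of U or continuity of f. *)
Lemma bounded_near_compact {n} (N : E n -> R) (T : option R) (U K : E n -> Prop)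
  (f : R -> E n -> E n) t :
  is_norm N -> is_open N U -> cont_on N T U f -> is_compact N K ->
  (forall x, K x -> U x) -> in_time T t ->
  exists r M, 0 < r /\ forall tau x y, 0 <= tau <= t -> K x -> N (vsub y x) <= r ->
    U y /\ N (f tau y) <= M.
Proof.
  intros HN HU Hf HK HKU Ht. apply NNPP; intro Hno.
  assert (Hbad : forall k : nat, exists p : R * E n * E n,
    0 <= fst (fst p) <= t /\ K (snd (fst p)) /\ N (vsub (snd p) (snd (fst p))) <= / (INR k + 1) /\
    (~ U (snd p) \/ INR k < N (f (fst (fst p)) (snd p)))).
  { intro k. apply NNPP; intro Hk. apply Hno. exists (/ (INR k + 1)), (INR k). split.
    { apply Rinv_0_lt_compat; pose proof (pos_INR k); lra. }
    intros tau x y Htau Hx Hy. apply NNPP; intro Hny. apply Hk. exists (tau, x, y). simpl.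
    refine (conj Htau (conj Hx (conj Hy _))).
    destruct (classic (U y)) as [Uy|nUy]; [right | left; exact nUy].
    apply Rnot_le_lt. intro Hle. apply Hny. split; assumption. }
  destruct (choice _ Hbad) as [p Hp].
  set (tau := fun k => fst (fst (p k))). set (x := fun k => snd (fst (p k))).
  set (y := fun k => snd (p k)).
  destruct (compact_time_space N K t tau x HK (fun k => proj1 (Hp k))
              (fun k => proj1 (proj2 (Hp k))))
    as [phi [s [l [Hphi [Hs [Hl [Htau Hx]]]]]]].
  destruct (HU l (HKU l Hl)) as [rho [Hrho Hball]].
  destruct (Hf s l (in_time_le T t s Ht Hs) (HKU l Hl) 1 Rlt_0_1) as [delta [Hdelta Hcont]].
  set (d := Rmin rho delta).
  assert (Hd : 0 < d) by (apply Rmin_pos; assumption).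
  destruct (eventually_witness _ (eventually_and _ _
    (eventually_and _ _ (Htau delta Hdelta) (Hx (d / 2) ltac:(lra)))
    (eventually_and _ _ (eventually_small (fun k => N (vsub (y k) (x k))) phi
                           (fun k => proj1 (proj2 (proj2 (Hp k)))) Hphi (d / 2) ltac:(lra))
                        (eventually_large phi (N (f s l) + 1) Hphi))))
    as [k [[Hk1 Hk2] [Hk3 Hk4]]].
  cbv beta in Hk1, Hk2, Hk3. unfold R_dist in Hk1.
  (* y_{phi k} is within d of l, hence in U and in the continuity neighbourhood of (s, l) *)
  assert (Hyl : N (vsub (y (phi k)) l) < d).
  { pose proof (N_tri HN (y (phi k)) l (x (phi k))). lra. }
  assert (Hy : U (y (phi k))) by (apply Hball; pose proof (Rmin_l rho delta); unfold d in Hyl; lra).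
  assert (Hfy : N (vsub (f (tau (phi k)) (y (phi k))) (f s l)) < 1).
  { apply Hcont; [apply (in_time_le T t), Hp; exact Ht | exact Hy | exact Hk1 |].
    pose proof (Rmin_r rho delta); unfold d in Hyl; lra. }
  pose proof (N_tri HN (f (tau (phi k)) (y (phi k))) vzero (f s l)) as Htri.
  rewrite !vsub_vzero in Htri.
  destruct (proj2 (proj2 (proj2 (Hp (phi k))))) as [Hout | Hbig]; [contradiction|].
  fold (tau (phi k)) (y (phi k)) in Hbig. lra.
Qed.

(** * The Lipschitz estimate for a single convex map *)

Definition extend_beyond {n} (N : E n -> R) (x1 x2 : E n) (r : R) : E n :=
  vadd x2 (vscal (r / N (vsub x2 x1)) (vsub x2 x1)).

Lemma extend_beyond_spec {n} (N : E n -> R) x1 x2 r :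
  is_norm N -> 0 < r -> 0 < N (vsub x2 x1) ->
  let s := N (vsub x2 x1) in
  N (vsub (extend_beyond N x1 x2 r) x2) = r /\
  vadd (vscal (s / (s + r)) (extend_beyond N x1 x2 r)) (vscal (1 - s / (s + r)) x1) = x2.
Proof.
  intros HN Hr Hs s. fold s in Hs. unfold extend_beyond. fold s. split.
  - replace (vsub (vadd x2 (vscal (r / s) (vsub x2 x1))) x2) with (vscal (r / s) (vsub x2 x1))
      by vec_ring.
    rewrite (N_scal HN), Rabs_right by (left; apply Rdiv_lt_0_compat; assumption).
    fold s. field. lra.
  - apply vext; intro i. unfold vadd, vscal, vsub. field. lra.
Qed.

(* Convexity gives two cone elements c1, c2 whose sum
   a (g z - g x1 + g w - g x2) has norm <= 4 a M; normality bounds c2, and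
   g x2 - g x1 = c2 - a (g w - g x2). *)
Lemma convex_secant_bound {n} (C : E n -> Prop) (N : E n -> R) (U : E n -> Prop)
  (g : E n -> E n) kappa M a x1 x2 z w :
  is_norm N -> 0 <= kappa ->
  (forall c v, C c -> C (vsub v c) -> N c <= kappa * N v) ->
  is_convex_map C U g -> 0 <= a <= 1 ->
  U x1 -> U x2 -> U z -> U w ->
  vadd (vscal a z) (vscal (1 - a) x1) = x2 -> vadd (vscal a w) (vscal (1 - a) x2) = x1 ->
  N (g x1) <= M -> N (g x2) <= M -> N (g z) <= M -> N (g w) <= M ->
  N (vsub (g x2) (g x1)) <= a * ((4 * kappa + 2) * M).
Proof.
  intros HN Hkappa Hnormal [_ Hconvex] Ha HUx1 HUx2 HUz HUw Hz Hw HMx1 HMx2 HMz HMw.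
  assert (Hc1 := Hconvex z x1 a HUz HUx1 Ha). rewrite Hz in Hc1.
  assert (Hc2 := Hconvex w x2 a HUw HUx2 Ha). rewrite Hw in Hc2.
  unfold cle in Hc1, Hc2.
  set (c1 := vsub (vadd (vscal a (g z)) (vscal (1 - a) (g x1))) (g x2)) in *.
  set (c2 := vsub (vadd (vscal a (g w)) (vscal (1 - a) (g x2))) (g x1)) in *.
  assert (Hsum : N (vadd c1 c2) <= a * (4 * M)).
  { replace (vadd c1 c2) with (vscal a (vadd (vsub (g z) (g x1)) (vsub (g w) (g x2))))
      by (unfold c1, c2; vec_ring).
    rewrite (N_scal HN), Rabs_right by lra. apply Rmult_le_compat_l; [lra|].
    eapply Rle_trans; [apply (N_add HN)|].
    pose proof (N_sub_le HN (g z) (g x1)). pose proof (N_sub_le HN (g w) (g x2)). lra. }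
  assert (Hdiff : N (vsub (g x2) (g x1)) <= N c2 + a * (2 * M)).
  { replace (vsub (g x2) (g x1)) with (vsub c2 (vscal a (vsub (g w) (g x2))))
      by (unfold c2; vec_ring).
    eapply Rle_trans; [apply (N_sub_le HN)|]. rewrite (N_scal HN), Rabs_right by lra.
    apply Rplus_le_compat_l, Rmult_le_compat_l; [lra|].
    pose proof (N_sub_le HN (g w) (g x2)). lra. }
  pose proof (normal_cone_summand C N kappa Hnormal c1 c2 Hc1 Hc2) as Hc2bound.
  assert (kappa * N (vadd c1 c2) <= kappa * (a * (4 * M))) by (apply Rmult_le_compat_l; auto).
  nra.
Qed.

(* If g is C-convex on U, C is normal with constant kappa, and |g| <= M on the closed
   r-neighbourhoods of x1 and x2 (which lie in U), then
   |g x2 - g x1| <= (4 kappa + 2) M / r * |x2 - x1|: apply the secant bound to the points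
   at distance r beyond x2 and beyond x1, where the weight is a = s/(s+r) <= s/r. *)
Lemma convex_lipschitz_estimate {n} (C : E n -> Prop) (N : E n -> R) (U : E n -> Prop)
  (g : E n -> E n) kappa M r x1 x2 :
  is_norm N -> 0 <= kappa ->
  (forall c v, C c -> C (vsub v c) -> N c <= kappa * N v) ->
  is_convex_map C U g -> 0 < r ->
  (forall y, N (vsub y x1) <= r \/ N (vsub y x2) <= r -> U y /\ N (g y) <= M) ->
  N (vsub (g x2) (g x1)) <= (4 * kappa + 2) * M / r * N (vsub x2 x1).
Proof.
  intros HN Hkappa Hnormal Hg Hr Hbound.
  assert (Hx1 : N (vsub x1 x1) <= r \/ N (vsub x1 x2) <= r).
  { left. replace (vsub x1 x1) with (@vzero n) by vec_ring. rewrite (N_zero HN); lra. }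
  assert (Hx2 : N (vsub x2 x1) <= r \/ N (vsub x2 x2) <= r).
  { right. replace (vsub x2 x2) with (@vzero n) by vec_ring. rewrite (N_zero HN); lra. }
  destruct (Hbound x1 Hx1) as [HUx1 HMx1]. destruct (Hbound x2 Hx2) as [HUx2 HMx2].
  assert (HM : 0 <= M) by (pose proof (N_nonneg HN (g x1)); lra).
  destruct (N_nonneg HN (vsub x2 x1)) as [Hs | Hs0].
  2:{
    assert (Hx12 : x2 = x1).
    { apply vext; intro i. pose proof (f_equal (fun v => v i) (N_eq0 HN _ (eq_sym Hs0))) as Hi.
      cbv beta in Hi. unfold vsub, vzero in Hi. lra. }
    replace (vsub (g x2) (g x1)) with (@vzero n) by (rewrite Hx12; vec_ring).
    rewrite (N_zero HN), <- Hs0. lra. }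
  set (s := N (vsub x2 x1)) in *.
  set (a := s / (s + r)).
  assert (Ha : 0 <= a <= 1).
  { unfold a. split; [apply Rlt_le, Rdiv_lt_0_compat; lra|].
    apply Rmult_le_reg_r with (s + r); [lra|]. unfold Rdiv. rewrite Rmult_assoc, Rinv_l; lra. }
  set (z := extend_beyond N x1 x2 r). set (w := extend_beyond N x2 x1 r).
  destruct (extend_beyond_spec N x1 x2 r HN Hr Hs) as [Hzr Hz]. fold s a z in Hzr, Hz.
  assert (Hs' : 0 < N (vsub x1 x2)) by (rewrite (N_sub_sym HN); exact Hs).
  destruct (extend_beyond_spec N x2 x1 r HN Hr Hs') as [Hwr Hw].
  rewrite (N_sub_sym HN x1 x2) in Hw. fold s a w in Hwr, Hw.
  destruct (Hbound z (or_intror (Req_le _ _ Hzr))) as [HUz HMz].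
  destruct (Hbound w (or_introl (Req_le _ _ Hwr))) as [HUw HMw].
  pose proof (convex_secant_bound C N U g kappa M a x1 x2 z w HN Hkappa Hnormal Hg Ha
                HUx1 HUx2 HUz HUw Hz Hw HMx1 HMx2 HMz HMw) as Hsecant.
  assert (Har : a * r <= s).
  { unfold a. apply Rmult_le_reg_r with (s + r); [lra|].
    replace (s / (s + r) * r * (s + r)) with (s * r) by (field; lra). nra. }
  eapply Rle_trans; [exact Hsecant|].
  replace ((4 * kappa + 2) * M / r * s) with ((4 * kappa + 2) * M * (s / r)) by (field; lra).
  rewrite Rmult_comm. apply Rmult_le_compat_l; [nra|].
  apply Rmult_le_reg_r with r; [exact Hr|]. unfold Rdiv. rewrite Rmult_assoc, Rinv_l; lra.
Qed.

Theorem mainTheorem2 (n : nat) (C : E n -> Prop) (N : E n -> R)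
  (T : option R) (U : E n -> Prop) (f : R -> E n -> E n) :
  is_proper_cone C -> is_closed N C -> is_norm N ->
  pos_horizon T ->
  (exists x0, U x0) -> is_convex_set U -> is_open N U ->
  cont_on N T U f ->
  (forall t, in_time T t -> is_convex_map C U (f t)) ->
  forall (K : E n -> Prop) (t : R),
    is_compact N K -> (forall x, K x -> U x) -> in_time T t ->
    exists L : R, forall tau x1 x2, 0 <= tau <= t -> K x1 -> K x2 -> x1 <> x2 ->
      N (vsub (f tau x2) (f tau x1)) <= L * N (vsub x2 x1).
Proof.
  intros HC Hcl HN _ _ _ HUo Hf Hconv K t HK HKU Ht.
  destruct (closed_cone_normal C N HC Hcl HN) as [kappa [Hkappa Hnormal]].
  destruct (bounded_near_compact N T U K f t HN HUo Hf HK HKU Ht) as [r [M [Hr Hbound]]].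
  exists ((4 * kappa + 2) * M / r).
  intros tau x1 x2 Htau Hx1 Hx2 _.
  apply (convex_lipschitz_estimate C N U (f tau)); auto.
  - apply Hconv, (in_time_le T t); assumption.
  - intros y [Hy | Hy]; [apply (Hbound tau x1) | apply (Hbound tau x2)]; assumption.
Qed.
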